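(* Let $\Sigma$ be a ranked alphabet, $B$ a strong bimonoid and $\mathcal{A}$ a bottom-up deterministic $(\Sigma,B)$-weighted tree automaton. Then $[\![\mathcal{A}]\!]^{\mathrm{init}}=[\![\mathcal{A}]\!]^{\mathrm{run}}$.
   Context: A ranked alphabet is a finite nonempty set $\Sigma$ with a rank map $\mathrm{rk}:\Sigma\to\mathbb{N}$; $\Sigma^{(k)}=\{\sigma\mid \mathrm{rk}(\sigma)=k\}$, and it is assumed that $\Sigma^{(0)}\neq\emptyset$. $T_\Sigma$ is the set of $\Sigma$-trees: the smallest set containing $\Sigma^{(0)}$ and containing $\sigma(\xi_1,\dots,\xi_k)$ whenever $k\ge 1$, $\sigma\in\Sigma^{(k)}$, $\xi_1,\dots,\xi_k\in T_\Sigma$ (for $k=0$ we write $\sigma$ for $\sigma()$). Positions: $\mathrm{pos}(\alpha)=\{\varepsilon\}$ for $\alpha\in\Sigma^{(0)}$, $\mathrm{pos}(\sigma(\xi_1,\dots,\xi_k))=\{\varepsilon\}\cup\{iv\mid i\in[k], v\in\mathrm{pos}(\xi_i)\}$. A strong bimonoid $(B,\oplus,\otimes,\mathbb{0},\mathbb{1})$ consists of a commutative monoid $(B,\oplus,\mathbb{0})$ and a (not necessarily commutative) monoid $(B,\otimes,\mathbb{1})$ with $\mathbb{0}\neq\mathbb{1}$ and $b\otimes\mathbb{0}=\mathbb{0}\otimes b=\mathbb{0}$ for all $b$; no distributivity is assumed. $\bigotimes_{i=1}^k a_i=a_1\otimes\cdots\otimes a_k$ in this order ($\mathbb{1}$ if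 $k=0$), and $\bigoplus$ over a finite index set is the iterated sum ($\mathbb{0}$ if empty). A $(\Sigma,B)$-weighted tree automaton (wta) is $\mathcal{A}=(Q,\delta,F)$ with $Q$ a finite nonempty set, $\delta=(\delta_k)_{k\in\mathbb{N}}$ with $\delta_k:Q^k\times\Sigma^{(k)}\times Q\to B$ (written $\delta_k(q_1\dots q_k,\sigma,q)$), and $F:Q\to B$. The vector algebra of $\mathcal{A}$ is the $\Sigma$-algebra $(B^Q,\delta_{\mathcal{A}})$ with $\delta_{\mathcal{A}}(\sigma)(v_1,\dots,v_k)_q=\bigoplus_{q_1,\dots,q_k\in Q}\big(\bigotimes_{i=1}^k (v_i)_{q_i}\big)\otimes\delta_k(q_1\dots q_k,\sigma,q)$. Let $h_{\mathrm{V}(\mathcal{A})}:T_\Sigma\to B^Q$ be defined by $h_{\mathrm{V}(\mathcal{A})}(\sigma(\xi_1,\dots,\xi_k))=\delta_{\mathcal{A}}(\sigma)(h_{\mathrm{V}(\mathcal{A})}(\xi_1),\dots,h_{\mathrm{V}(\mathcal{A})}(\xi_k))$. The initial algebra semantics is $[\![\mathcal{A}]\!]^{\mathrm{init}}(\xi)=\bigoplus_{q\in Q}h_{\mathrm{V}(\mathcal{A})}(\xi)_q\otimes F_q$. A run of $\mathcal{A}$ on $\xi$ is a map $\rho:\mathrm{pos}(\xi)\to Q$; $R_{\mathcal{A}}(\xi)$ is the set of runs on $\xi$; $\rho|_i$ is the run on $\xi_i$ given by $\rho|_i(w)=\rho(iw)$. For $\xi=\sigma(\xi_1,\dots,\xi_k)$,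 $\mathrm{wt}_{\mathcal{A}}(\rho)=\big(\bigotimes_{i=1}^k\mathrm{wt}_{\mathcal{A}}(\rho|_i)\big)\otimes\delta_k(\rho(1)\dots\rho(k),\sigma,\rho(\varepsilon))$. The run semantics is $[\![\mathcal{A}]\!]^{\mathrm{run}}(\xi)=\bigoplus_{\rho\in R_{\mathcal{A}}(\xi)}\mathrm{wt}_{\mathcal{A}}(\rho)\otimes F_{\rho(\varepsilon)}$. $\mathcal{A}$ is bottom-up deterministic if for all $k$, $\sigma\in\Sigma^{(k)}$, $q_1,\dots,q_k\in Q$ there is at most one $q\in Q$ with $\delta_k(q_1\dots q_k,\sigma,q)\neq\mathbb{0}$. *)

From mathcomp Require Import all_boot.
Set Implicit Arguments. Unset Strict Implicit. Unset Printing Implicit Defensive.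

(* Strong bimonoid: commutative monoid (add, zero), monoid (mul, one),
   zero <> one, zero absorbing for mul; no distributivity. *)
Record strong_bimonoid := StrongBimonoid {
  sb_car :> Type;
  sb_add : sb_car -> sb_car -> sb_car;
  sb_mul : sb_car -> sb_car -> sb_car;
  sb_zero : sb_car;
  sb_one : sb_car;
  sb_addA : associative sb_add;
  sb_addC : commutative sb_add;
  sb_add0r : left_id sb_zero sb_add;
  sb_mulA : associative sb_mul;
  sb_mul1r : left_id sb_one sb_mul;
  sb_mulr1 : right_id sb_one sb_mul;
  sb_mul0r : left_zero sb_zero sb_mul;
  sb_mulr0 : right_zero sb_zero sb_mul;
  sb_nontriv : sb_zero <> sb_one }.

Inductive tree (S : Type) := Node of S & seq (tree S).
Arguments Node {S} _ _.

Section Defs.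
Variables (Sigma : finType) (rk : Sigma -> nat).

Fixpoint wf_tree (t : tree Sigma) : bool :=
  let: Node s ts := t in (size ts == rk s) && all wf_tree ts.

(* positions (1-based child indices) *)
Fixpoint pos (t : tree Sigma) : seq (seq nat) :=
  let: Node _ ts := t in
  [::] :: (fix aux (i : nat) (us : seq (tree Sigma)) :=
             match us with
             | [::] => [::]
             | u :: us' => map (cons i) (pos u) ++ aux i.+1 us'
             end) 1 ts.

Lemma root_in_pos (t : tree Sigma) : [::] \in pos t.
Proof. by case: t => s ts /=; rewrite in_cons eqxx. Qed.

Variables (B : strong_bimonoid) (Q : finType).
Variables (delta : seq Q -> Sigma -> Q -> B) (F : Q -> B).
(* delta qs sigma q stands for delta_k(q1...qk, sigma, q); it is only ever
   used / constrained for size qs = rk sigma. *)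

Local Notation "a (+) b" := (sb_add a b) (at level 50, left associativity).
Local Notation "a (x) b" := (sb_mul a b) (at level 40, left associativity).

Definition vec_op (s : Sigma) (vs : seq (Q -> B)) (q : Q) : B :=
  \big[@sb_add B/sb_zero B]_(qs : (size vs).-tuple Q)
     ((\big[@sb_mul B/sb_one B]_(p <- zip vs qs) p.1 p.2) (x) delta qs s q).

Fixpoint hV (t : tree Sigma) : Q -> B :=
  let: Node s ts := t in vec_op s (map hV ts).

Definition init_sem (t : tree Sigma) : B :=
  \big[@sb_add B/sb_zero B]_(q : Q) (hV t q (x) F q).

(* weight of a run given as a map from positions to states; the run on the
   i-th subtree is rho|_i (w) = rho (i w) *)
Fixpoint wt (t : tree Sigma) (r : seq nat -> Q) : B :=
  let: Node s ts := t in
  (fix aux (i : nat) (us : seq (tree Sigma)) (r : seq nat -> Q) :=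
     match us with
     | [::] => sb_one B
     | u :: us' => wt u (fun w => r (i :: w)) (x) aux i.+1 us' r
     end) 1 ts r
  (x) delta [seq r [:: i] | i <- iota 1 (size ts)] s (r [::]).

Definition run (t : tree Sigma) := {ffun seq_sub (pos t) -> Q}.

Definition root_pos (t : tree Sigma) : seq_sub (pos t) :=
  SeqSub (root_in_pos t).

Definition run_fun (t : tree Sigma) (rho : run t) : seq nat -> Q :=
  fun w => match (insub w : option (seq_sub (pos t))) with
           | Some p => rho p
           | None => rho (root_pos t)
           end.

Definition run_sem (t : tree Sigma) : B :=
  \big[@sb_add B/sb_zero B]_(rho : run t)
     (wt t (run_fun rho) (x) F (rho (root_pos t))).

Definition bu_deterministic : Prop :=
  forall (s : Sigma) (qs : seq Q), size qs = rk s ->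
  forall q q' : Q, delta qs s q <> sb_zero B -> delta qs s q' <> sb_zero B -> q = q'.

End Defs.

From mathcomp Require Import all_boot.
From HB Require Import structures.
From Stdlib Require Import Classical.
From Stdlib Require List.
Set Implicit Arguments. Unset Strict Implicit. Unset Printing Implicit Defensive.

(* Determinism singles out one run r0 on xi: at every node, r0 takes the only
   state that delta can reach from the states r0 assigns to the children.  By
   induction on xi, every run of nonzero weight agrees with r0 on pos(xi), and
   h_V(xi) is wt(r0) at r0(eps) and zero elsewhere: in the sum defining vec_op,
   every tuple of child states other than the one chosen by r0 contributes a
   product with a zero factor, so no distributivity is needed.  Both semantics
   therefore collapse to the single term wt(r0) * F(r0(eps)). *)

Section StrongBimonoid.
Variable B : strong_bimonoid.

Local Notation "a (x) b" := (sb_mul a b) (at level 40, left associativity).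
Local Notation zero := (sb_zero B).
Local Notation one := (sb_one B).

Lemma sb_addr0 : right_id zero (@sb_add B).
Proof. by move=> a; rewrite sb_addC sb_add0r. Qed.

HB.instance Definition _ := Monoid.isComLaw.Build (sb_car B) zero (@sb_add B)
  (@sb_addA B) (@sb_addC B) (@sb_add0r B).

Lemma sb_mul_neq0 (a b : B) : a (x) b <> zero -> a <> zero /\ b <> zero.
Proof. by move=> nz; split=> E; apply: nz; rewrite E ?sb_mul0r ?sb_mulr0. Qed.

Lemma sb_sum1 (I : finType) (i0 : I) (f : I -> B) :
  (forall i, i != i0 -> f i = zero) -> \big[@sb_add B/zero]_i f i = f i0.
Proof. by move=> f0; rewrite (bigD1 i0) //= big1 ?sb_addr0. Qed.

Lemma big_ord_mul_eq0 n (f : 'I_n -> B) j :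
  f j = zero -> \big[@sb_mul B/one]_(i < n) f i = zero.
Proof.
elim: n f j => [|n IH] f j; first by case: j.
rewrite big_ord_recl; case: (unliftP ord0 j) => [j' -> | ->] fj0.
  by rewrite (IH _ j') // sb_mulr0.
by rewrite fj0 sb_mul0r.
Qed.

Lemma big_zip_ord (X : Type) dv dx (vs : seq (X -> B)) (xs : seq X) :
  size vs = size xs ->
  \big[@sb_mul B/one]_(p <- zip vs xs) p.1 p.2 =
  \big[@sb_mul B/one]_(j < size vs) nth dv vs j (nth dx xs j).
Proof.
move=> size_eq; rewrite (big_nth (dv, dx)) size_zip -size_eq minnn big_mkord.
by apply: eq_bigr => j _; rewrite nth_zip.
Qed.

End StrongBimonoid.

Lemma nth_choice (X : Type) (x0 : X) (P : nat -> X -> Prop) n :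
  (forall j, j < n -> exists x, P j x) ->
  exists xs, forall j, j < n -> P j (nth x0 xs j).
Proof.
elim: n P => [|n IH] P exP; first by exists [::].
have [x Px] := exP 0 erefl.
have [xs Pxs] := IH (fun j => P j.+1) (fun j => exP j.+1).
by exists (x :: xs) => -[|j] //= /Pxs.
Qed.

Section Positions.
Variable Sigma : finType.

Lemma tree_In_ind (P : tree Sigma -> Prop) :
  (forall s ts, (forall u, List.In u ts -> P u) -> P (Node s ts)) ->
  forall t, P t.
Proof.
move=> IH; refine (fix ind t := match t with Node s ts => IH s ts _ end).
refine ((fix ind_seq us : forall u, List.In u us -> P u :=
  match us with
  | [::] => fun u (u_in : List.In u [::]) => False_ind _ u_in
  | v :: us' => fun u u_in => match u_in with
                 | or_introl e => eq_ind v P (ind v) u e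
                 | or_intror u_in' => ind_seq us' u u_in' end end) ts).
Qed.

Lemma In_nth (d : tree Sigma) ts j : j < size ts -> List.In (nth d ts j) ts.
Proof. by elim: ts j => [|u us IH] [|j] //= lt_j; [left | right; apply: IH]. Qed.

Fixpoint pos_seq (i : nat) (us : seq (tree Sigma)) : seq (seq nat) :=
  if us is u :: us' then map (cons i) (pos u) ++ pos_seq i.+1 us' else [::].

Lemma mem_pos_seq (d : tree Sigma) i us w :
  w \in pos_seq i us <->
  exists j, j < size us /\ exists2 w', w' \in pos (nth d us j) & w = i + j :: w'.
Proof.
elim: us i w => [|u us IH] i w /=; first by split=> // -[j []].
rewrite mem_cat; split.
  case/orP=> [/mapP [w' w'_in ->] | /IH [j [lt_j [w' w'_in ->]]]].
    by exists 0; split=> //; exists w'; rewrite ?addn0.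
  by exists j.+1; split=> //; exists w'; rewrite ?addSnnS.
case=> -[|j] [lt_j [w' w'_in ->]]; first by rewrite addn0 map_f.
by apply/orP; right; apply/IH; exists j; split=> //; exists w'; rewrite ?addSnnS.
Qed.

Lemma pos_NodeP (s : Sigma) ts w :
  w \in pos (Node s ts) <-> w = [::] \/
  exists j, j < size ts /\ exists2 w', w' \in pos (nth (Node s ts) ts j) & w = j.+1 :: w'.
Proof.
have -> : pos (Node s ts) = [::] :: pos_seq 1 ts by [].
rewrite in_cons; split.
  case/orP=> [/eqP -> | /(mem_pos_seq (Node s ts)) [j [lt_j [w' w'_in ->]]]].
    by left.
  by right; exists j; split=> //; exists w'.
case=> [-> | [j [lt_j [w' w'_in ->]]]]; first by rewrite eqxx.
by apply/orP; right; apply/(mem_pos_seq (Node s ts)); exists j; split=> //; exists w'.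
Qed.

End Positions.

Section Runs.
Variables (Sigma : finType) (B : strong_bimonoid) (Q : finType).
Variable delta : seq Q -> Sigma -> Q -> B.

Local Notation "a (x) b" := (sb_mul a b) (at level 40, left associativity).
Local Notation zero := (sb_zero B).
Local Notation one := (sb_one B).
Local Notation wt := (wt delta).
Local Notation hV := (hV delta).

Definition subrun (r : seq nat -> Q) (i : nat) : seq nat -> Q := fun w => r (i :: w).

Definition root_states (r : seq nat -> Q) (n : nat) : seq Q :=
  [seq r [:: i] | i <- iota 1 n].

Fixpoint wt_seq (i : nat) (us : seq (tree Sigma)) (r : seq nat -> Q) : B :=
  if us is u :: us' then wt u (subrun r i) (x) wt_seq i.+1 us' r else one.

Lemma wt_seqE (d : tree Sigma) i us r :
  wt_seq i us r =
  \big[@sb_mul B/one]_(j < size us) wt (nth d us j) (subrun r (i + j)).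
Proof.
elim: us i => [|u us IH] i /=; first by rewrite big_ord0.
rewrite big_ord_recl addn0 (IH i.+1); congr (_ (x) _).
by apply: eq_bigr => j _; rewrite addSnnS.
Qed.

Lemma wt_Node s ts r :
  wt (Node s ts) r =
  \big[@sb_mul B/one]_(j < size ts) wt (nth (Node s ts) ts j) (subrun r j.+1)
    (x) delta (root_states r (size ts)) s (r [::]).
Proof. by rewrite -[in RHS](wt_seqE _ 1). Qed.

Lemma eq_wt_pos t r r' : {in pos t, r =1 r'} -> wt t r = wt t r'.
Proof.
elim/tree_In_ind: t r r' => s ts IH r r' eq_r.
have eq_sub j : j < size ts ->
    {in pos (nth (Node s ts) ts j), subrun r j.+1 =1 subrun r' j.+1}.
  move=> lt_j w w_in; apply: eq_r; apply/pos_NodeP.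
  by right; exists j; split=> //; exists w.
rewrite !wt_Node (eq_r [::]); last by apply/pos_NodeP; left.
congr (_ (x) delta _ s _).
  by apply: eq_bigr => j _; apply: IH; [apply: In_nth | apply: eq_sub].
apply/eq_in_map => -[|j]; rewrite mem_iota // add1n ltnS => /andP [_ lt_j].
exact: eq_sub lt_j [::] (root_in_pos _).
Qed.

Inductive det_run : tree Sigma -> (seq nat -> Q) -> Prop :=
  DetRun s ts r :
    (forall j, j < size ts -> det_run (nth (Node s ts) ts j) (subrun r j.+1)) ->
    (forall q, delta (root_states r (size ts)) s q <> zero -> q = r [::]) ->
    det_run (Node s ts) r.

Lemma det_run_wt_neq0 t r0 : det_run t r0 ->
  forall r, wt t r <> zero -> {in pos t, r =1 r0}.
Proof.
elim=> s ts {}r0 _ IH root_det r; rewrite wt_Node => /sb_mul_neq0 [nz_sub nz_delta].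
have eq_sub j : j < size ts ->
    {in pos (nth (Node s ts) ts j), subrun r j.+1 =1 subrun r0 j.+1}.
  move=> lt_j; apply: IH => // nz; apply: nz_sub.
  exact: (big_ord_mul_eq0 (j := Ordinal lt_j)).
have eq_states : root_states r (size ts) = root_states r0 (size ts).
  apply/eq_in_map => -[|j]; rewrite mem_iota // add1n ltnS => /andP [_ lt_j].
  exact: eq_sub lt_j [::] (root_in_pos _).
have eq_root : r [::] = r0 [::] by apply: root_det; rewrite -eq_states.
by move=> w /pos_NodeP [-> | [j [lt_j [w' w'_in ->]]]] //; apply: eq_sub.
Qed.

Lemma hV_det_run t r0 : det_run t r0 ->
  forall q, hV t q = if q == r0 [::] then wt t r0 else zero.
Proof.
elim=> s ts {}r0 _ IH root_det q; rewrite [LHS]/= /vec_op.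
have size_states : size (root_states r0 (size ts)) == size (map hV ts).
  by rewrite /root_states !size_map size_iota.
have hV_sub j (qj : Q) : j < size ts ->
    nth (fun _ => zero) (map hV ts) j qj =
    if qj == r0 [:: j.+1] then wt (nth (Node s ts) ts j) (subrun r0 j.+1) else zero.
  by move=> lt_j; rewrite (nth_map (Node s ts)) // IH.
have nth_states j : j < size ts -> nth q (root_states r0 (size ts)) j = r0 [:: j.+1].
  by move=> lt_j; rewrite /root_states (nth_map 0) ?size_iota // nth_iota.
rewrite (sb_sum1 (i0 := Tuple size_states)) => [|qs qs_neq].
  rewrite (big_zip_ord (fun _ => zero) q) ?size_tuple //.
  rewrite (_ : tval _ = root_states r0 (size ts)) // size_map wt_Node.
  rewrite (eq_bigr (fun j : 'I__ => wt (nth (Node s ts) ts j) (subrun r0 j.+1)));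
    last first.
    by move=> j _; rewrite hV_sub ?nth_states ?eqxx.
  case: eqP => [-> // | neq_root].
  rewrite (_ : delta _ s q = zero) ?sb_mulr0 //.
  by apply: NNPP => nz; apply/neq_root/root_det.
have /existsP [j neq_j] : [exists j, tnth qs j != tnth (Tuple size_states) j].
  move: qs_neq; apply: contraR => /existsPn same; apply/eqP/eq_from_tnth => j.
  by apply/eqP; move: (same j); rewrite negbK.
have lt_j : j < size ts by rewrite -(size_map hV).
move: neq_j; rewrite !(tnth_nth q) nth_states // => neq_j.
rewrite (big_zip_ord (fun _ => zero) q) ?size_tuple //.
rewrite (big_ord_mul_eq0 (j := j)) ?sb_mul0r //.
by rewrite hV_sub // (negPf neq_j).
Qed.

Lemma run_funE (t : tree Sigma) (rho : run Q t) (p : seq_sub (pos t)) :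
  run_fun rho (ssval p) = rho p.
Proof. by rewrite /run_fun valK. Qed.

Section Semantics.
Variable F : Q -> B.

Lemma init_sem_det_run t r0 : det_run t r0 ->
  init_sem delta F t = wt t r0 (x) F (r0 [::]).
Proof.
move=> r0_det; rewrite /init_sem (sb_sum1 (i0 := r0 [::])) => [|q /negPf neq_q].
  by rewrite (hV_det_run r0_det) eqxx.
by rewrite (hV_det_run r0_det) neq_q sb_mul0r.
Qed.

Lemma run_sem_det_run t r0 : det_run t r0 ->
  run_sem delta F t = wt t r0 (x) F (r0 [::]).
Proof.
move=> r0_det; pose rho0 : run Q t := [ffun p => r0 (ssval p)].
rewrite /run_sem (sb_sum1 (i0 := rho0)) => [|rho rho_neq].
  rewrite ffunE (@eq_wt_pos t _ r0) // => w w_in.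
  by rewrite -[w]/(ssval (SeqSub w_in)) run_funE ffunE.
have /existsP [p neq_p] : [exists p, rho p != rho0 p].
  move: rho_neq; apply: contraR => /existsPn same; apply/eqP/ffunP => p.
  by apply/eqP; move: (same p); rewrite negbK.
suff -> : wt t (run_fun rho) = zero by rewrite sb_mul0r.
apply: NNPP => nz; move: neq_p.
by rewrite ffunE -run_funE (det_run_wt_neq0 r0_det nz (ssvalP p)) eqxx.
Qed.

End Semantics.

Section Deterministic.
Variables (rk : Sigma -> nat) (q0 : Q).
Hypothesis deltaP : bu_deterministic rk delta.

Lemma bu_det_target s qs : size qs = rk s ->
  exists q1, forall q, delta qs s q <> zero -> q = q1.
Proof.
move=> size_qs; case: (classic (exists q, delta qs s q <> zero)) => [[q1 nz1] | none].
  by exists q1 => q nz; apply: deltaP nz nz1.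
by exists q0 => q nz; case: none; exists q.
Qed.

Lemma exists_det_run t : wf_tree rk t -> exists r0, det_run t r0.
Proof.
elim/tree_In_ind: t => s ts IH /= /andP [/eqP size_ts wf_ts].
have [rs rsP] : exists rs, forall j, j < size ts ->
    det_run (nth (Node s ts) ts j) (nth (fun _ => q0) rs j).
  apply: (@nth_choice _ _ (fun j => det_run (nth (Node s ts) ts j))) => j lt_j.
  by apply: IH; [apply: In_nth | apply: (all_nthP _ wf_ts)].
pose r1 q1 (w : seq nat) := if w is i :: w' then nth (fun _ => q0) rs i.-1 w' else q1.
(* The root states of [r1 q1] do not depend on [q1]. *)
have size_states : size (root_states (r1 q0) (size ts)) = rk s.
  by rewrite /root_states size_map size_iota.
have [q1 q1P] := bu_det_target size_states.
by exists (r1 q1); apply: DetRun => [j /rsP | q /q1P].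
Qed.

End Deterministic.
End Runs.

Theorem theorem3p6
  (Sigma : finType) (rk : Sigma -> nat) (Hnullary : exists a : Sigma, rk a = 0)
  (B : strong_bimonoid)
  (Q : finType) (HQ : 0 < #|Q|)
  (delta : seq Q -> Sigma -> Q -> B) (F : Q -> B)
  (Hdet : bu_deterministic rk delta) :
  forall xi : tree Sigma, wf_tree rk xi ->
    init_sem delta F xi = run_sem delta F xi.
Proof.
move=> xi wf_xi; case/card_gt0P: HQ => q0 _.
have [r0 r0_det] := exists_det_run q0 Hdet wf_xi.
by rewrite (init_sem_det_run F r0_det) (run_sem_det_run F r0_det).
Qed.
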